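(* Let $m\ge 1$ and $k\in\mathbb N_0$, and let $\mathbf{P}_k(\underline x)$ be an $\mathbb R_{0,m}$-valued homogeneous polynomial of degree $k$ in $\underline x\in\mathbb R^m$ which is monogenic in $\mathbb R^m$, i.e. $\partial_{\underline x}\mathbf{P}_k(\underline x)=0$. Define $\beta_k(0)=1$ and, for $n\ge1$, \[\beta_k(n)=\begin{cases} n, & n \text{ even},\\ 2k+m+n-1, & n\text{ odd},\end{cases}\] and for $0\le j\le n$ put $C_{k,n}(j)=\dfrac{(n-j)!}{\prod_{s=0}^{n-j}\beta_k(s)}$. For $n\ge0$ and $x=(x_0,\underline x)\in\mathbb R^{m+1}$ define \[\mathsf{M}_n^k(x)=\left(\sum_{j=0}^n\binom{n}{j}C_{k,n}(j)\,x_0^j\,\underline x^{\,n-j}\right)\mathbf{P}_k(\underline x).\] Then $\mathsf{M}_0^k(x)=\mathbf{P}_k(\underline x)$, each $\mathsf{M}_n^k$ is an $\mathbb R_{0,m}$-valued polynomial which is monogenic in $\mathbb R^{m+1}$ (i.e. $\partial_x\mathsf{M}_n^k=0$ on $\mathbb R^{m+1}$), and the sequence satisfies the Appell condition \[\tfrac12\,\overline\partial_x\mathsf{M}_n^k(x)=n\,\mathsf{M}_{n-1}^k(x),\qquad n\ge1.\]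
   Context: $\mathbb R_{0,m}$ is the real Clifford algebra generated by an orthonormal basis $e_1,\dots,e_m$ of $\mathbb R^m$ with relations $e_j^2=-1$ and $e_je_k+e_ke_j=0$ for $j\ne k$. A point $x=(x_0,x_1,\dots,x_m)\in\mathbb R^{m+1}$ is identified with the paravector $x_0+\underline x$, where $\underline x=\sum_{j=1}^m x_je_j$; powers $\underline x^{\,n}$ are taken in $\mathbb R_{0,m}$. The Dirac operator is $\partial_{\underline x}=\sum_{j=1}^m e_j\partial_{x_j}$, the generalized Cauchy–Riemann operator is $\partial_x=\partial_{x_0}+\partial_{\underline x}$, and its conjugate is $\overline\partial_x=\partial_{x_0}-\partial_{\underline x}$. A continuously differentiable $\mathbb R_{0,m}$-valued function $f$ is (left) monogenic in an open set of $\mathbb R^{m+1}$ if $\partial_x f=0$ there (operators act from the left), and a function on an open subset of $\mathbb R^m$ is monogenic if $\partial_{\underline x}f=0$. *)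

From HB Require Import structures.
From mathcomp Require Import all_boot all_order all_algebra.
From mathcomp Require Import all_classical all_reals all_analysis.
Set Implicit Arguments. Unset Strict Implicit. Unset Printing Implicit Defensive.
Import Order.TTheory GRing.Theory Num.Theory.
Import numFieldNormedType.Exports.
Local Open Scope ring_scope.

(* The real Clifford algebra R_{0,m}: an element is the family of its      *)
(* coordinates on the blade basis e_A, A a subset of {0..m-1}              *)
(* (e_A = e_{a1} ... e_{ap} for A = {a1 < ... < ap}, e_emptyset = 1).      *)
Notation Cl R m := {ffun {set 'I_m} -> R}.

(* sign of e_A e_B = sign * e_{A symdiff B}, using e_j^2 = -1 and          *)
(* anticommutation e_j e_k = - e_k e_j (j <> k)                            *)
Definition clscale (R : nzRingType) (m : nat) (c : R) (a : Cl R m) : Cl R m :=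
  [ffun A => c * a A].

Definition blade_sign (R : nzRingType) (m : nat) (A B : {set 'I_m}) : R :=
  (-1) ^+ (#|[set p : 'I_m * 'I_m | (p.1 \in A) && (p.2 \in B) && (p.2 < p.1)%N]|
           + #|A :&: B|).

Definition blade (R : nzRingType) (m : nat) (C : {set 'I_m}) : Cl R m :=
  [ffun D => (D == C)%:R].

Definition clmul (R : nzRingType) (m : nat) (a b : Cl R m) : Cl R m :=
  \sum_(A : {set 'I_m}) \sum_(B : {set 'I_m})
     clscale (a A * b B * blade_sign R A B) (blade R ((A :\: B) :|: (B :\: A))).

Definition cl1 (R : nzRingType) (m : nat) : Cl R m := blade R (finset.set0 : {set 'I_m}).
Definition clgen (R : nzRingType) (m : nat) (j : 'I_m) : Cl R m := blade R (finset.set1 j).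

Definition clexp (R : nzRingType) (m : nat) (a : Cl R m) (n : nat) : Cl R m :=
  iter n (clmul a) (cl1 R m).

Definition clvec (R : nzRingType) (m : nat) (x : 'rV[R]_m) : Cl R m :=
  \sum_(j < m) clscale (x 0 j) (clgen R j).

Definition unitv (R : realType) (n : nat) (i : 'I_n) : 'rV[R]_n :=
  \row_(j < n) (i == j)%:R.

Definition clpartial (R : realType) (n m : nat) (i : 'I_n)
  (F : 'rV[R]_n -> Cl R m) (x : 'rV[R]_n) : Cl R m :=
  [ffun A => 'D_(unitv R i) (fun y => F y A) x].

Definition cl_C1 (R : realType) (n m : nat) (F : 'rV[R]_n -> Cl R m) : Prop :=
  forall (A : {set 'I_m}) (i : 'I_n),
    (forall x, derivable (fun y => F y A) x (unitv R i)) /\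
    continuous (fun x => 'D_(unitv R i) (fun y => F y A) x).

Definition dirac (R : realType) (m : nat) (F : 'rV[R]_m -> Cl R m)
  (x : 'rV[R]_m) : Cl R m :=
  \sum_(j < m) clmul (clgen R j) (clpartial j F x).

Definition x0 (R : nzRingType) (m : nat) (x : 'rV[R]_(m.+1)) : R := x 0 ord0.
Definition xvec (R : nzRingType) (m : nat) (x : 'rV[R]_(m.+1)) : 'rV[R]_m :=
  \row_(j < m) x 0 (lift ord0 j).

Definition cauchy_riemann (R : realType) (m : nat) (F : 'rV[R]_(m.+1) -> Cl R m)
  (x : 'rV[R]_(m.+1)) : Cl R m :=
  clpartial ord0 F x + \sum_(j < m) clmul (clgen R j) (clpartial (lift ord0 j) F x).

Definition cauchy_riemann_conj (R : realType) (m : nat) (F : 'rV[R]_(m.+1) -> Cl R m)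
  (x : 'rV[R]_(m.+1)) : Cl R m :=
  clpartial ord0 F x - \sum_(j < m) clmul (clgen R j) (clpartial (lift ord0 j) F x).

Definition monogenic_Rm (R : realType) (m : nat) (F : 'rV[R]_m -> Cl R m) : Prop :=
  cl_C1 F /\ forall x, dirac F x = 0.

Definition monogenic_Rm1 (R : realType) (m : nat) (F : 'rV[R]_(m.+1) -> Cl R m) : Prop :=
  cl_C1 F /\ forall x, cauchy_riemann F x = 0.

Definition monomial (R : nzRingType) (n : nat) (a : 'I_n -> nat) (x : 'rV[R]_n) : R :=
  \prod_(i < n) x 0 i ^+ a i.

Definition cl_poly (R : nzRingType) (n m : nat) (F : 'rV[R]_n -> Cl R m) : Prop :=
  exists s : seq (Cl R m * ('I_n -> nat)),
    forall x, F x = \sum_(p <- s) clscale (monomial p.2 x) p.1.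

Definition cl_homog_poly (R : nzRingType) (n m k : nat) (F : 'rV[R]_n -> Cl R m) : Prop :=
  exists s : seq (Cl R m * ('I_n -> nat)),
    all (fun p : Cl R m * ('I_n -> nat) => (\sum_(i < n) p.2 i)%N == k) s /\
    forall x, F x = \sum_(p <- s) clscale (monomial p.2 x) p.1.

Definition beta (R : nzRingType) (m k n : nat) : R :=
  if n == 0%N then 1
  else if odd n then (2 * k + m + n - 1)%:R else n%:R.

Definition Ccoef (R : fieldType) (m k n j : nat) : R :=
  (n - j)`!%:R / \prod_(s < (n - j).+1) beta R m k s.

Definition appellM (R : realType) (m k : nat) (P : 'rV[R]_m -> Cl R m) (n : nat)
  (x : 'rV[R]_(m.+1)) : Cl R m :=
  clmul (\sum_(j < n.+1)
           clscale ('C(n, j)%:R * Ccoef R m k n j * x0 x ^+ j) (clexp (clvec (xvec x)) (n - j)))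
        (P (xvec x)).

From Pilot Require Import Defs.
From HB Require Import structures.
From mathcomp Require Import all_boot all_order all_algebra.
From mathcomp Require Import all_classical all_reals all_analysis.
From mathcomp Require Import ring lra zify.
Import Order.TTheory GRing.Theory Num.Theory.
Import numFieldNormedType.Exports.
Set Implicit Arguments. Unset Strict Implicit. Unset Printing Implicit Defensive.
Local Open Scope ring_scope.

(* Write M_n(x) = sum_j a(n,j) x_0^j G_(n-j)(x_), with G_l(y) = y^l P(y) and
   a(n,j) = binomial(n,j) C_(k,n)(j).  Since P is monogenic and homogeneous of degree k,
   Euler's identity and the anticommutation rule e_j y + y e_j = -2 y_j give
   dirac G_l = -b(l) G_(l-1), where b = beta_nat satisfies b(l) + b(l+1) = m + 2l + 2k.
   The Cauchy-Riemann equation for M_n then reduces to (j+1) a(n,j+1) = b(n-j) a(n,j),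
   which is exactly how the quotients C_(k,n) are built.  Once d_x M_n = 0 the conjugate
   operator equals 2 d_(x_0), and the Appell identity is (j+1) a(n+1,j+1) = (n+1) a(n,j).
   Polynomiality and C^1 regularity come from the closure of polynomial functions under
   sums, products and partial derivatives. *)

Section PolynomialFunctions.
Variables (R : realType) (n : nat).
Local Notation V := 'rV[R]_n.
Implicit Types f g : V -> R.

Inductive polyfun : (V -> R) -> Prop :=
| polyfun_cst (c : R) : polyfun (fun _ => c)
| polyfun_coord (i : 'I_n) : polyfun (fun x => x 0 i)
| polyfunD f g : polyfun f -> polyfun g -> polyfun (fun x => f x + g x)
| polyfunM f g : polyfun f -> polyfun g -> polyfun (fun x => f x * g x).

Lemma eq_polyfun f g : polyfun f -> (forall x, f x = g x) -> polyfun g.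
Proof. by move=> pf /funext <-. Qed.

Lemma polyfun_sum (I : Type) (r : seq I) (F : I -> V -> R) :
  (forall i, polyfun (F i)) -> polyfun (fun x => \sum_(i <- r) F i x).
Proof.
move=> pF; elim: r => [|i r IH]; first by apply: (eq_polyfun (polyfun_cst 0)) => x; rewrite big_nil.
by apply: (eq_polyfun (polyfunD (pF i) IH)) => x; rewrite big_cons.
Qed.

Lemma polyfun_prod (I : Type) (r : seq I) (F : I -> V -> R) :
  (forall i, polyfun (F i)) -> polyfun (fun x => \prod_(i <- r) F i x).
Proof.
move=> pF; elim: r => [|i r IH]; first by apply: (eq_polyfun (polyfun_cst 1)) => x; rewrite big_nil.
by apply: (eq_polyfun (polyfunM (pF i) IH)) => x; rewrite big_cons.
Qed.

Lemma polyfunX f p : polyfun f -> polyfun (fun x => f x ^+ p).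
Proof.
move=> pf; elim: p => [|p IH]; first by apply: (eq_polyfun (polyfun_cst 1)) => x; rewrite expr0.
by apply: (eq_polyfun (polyfunM pf IH)) => x; rewrite exprS.
Qed.

Lemma polyfun_monomial (a : 'I_n -> nat) : polyfun (monomial a).
Proof. by apply: polyfun_prod => i; apply/polyfunX/polyfun_coord. Qed.

Lemma polyfun_differentiable f a : polyfun f -> differentiable f a.
Proof.
move=> pf; elim: pf a => [c|i|{}f g _ df _ dg|{}f g _ df _ dg] a.
- exact: differentiable_cst.
- exact: differentiable_coord.
- exact: differentiableD.
- exact: differentiableM.
Qed.

Lemma polyfun_derivable f a v : polyfun f -> derivable f a v.
Proof. by move=> pf; apply/diff_derivable/polyfun_differentiable. Qed.

Lemma polyfun_continuous f : polyfun f -> continuous f.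
Proof. by move=> pf a; apply/differentiable_continuous/polyfun_differentiable. Qed.

Lemma derive_coord (i : 'I_n) a v : 'D_v (fun x : V => x 0 i) a = v 0 i.
Proof.
have /rowP/(_ i) := derive_mx (@derivable_id _ _ a v).
by rewrite derive_id !mxE.
Qed.

Lemma derive_polyfunD f g a v : polyfun f -> polyfun g ->
  'D_v (fun x => f x + g x) a = 'D_v f a + 'D_v g a.
Proof. by move=> pf pg; rewrite deriveD //; apply: polyfun_derivable. Qed.

Lemma derive_polyfunM f g a v : polyfun f -> polyfun g ->
  'D_v (fun x => f x * g x) a = 'D_v f a * g a + f a * 'D_v g a.
Proof.
move=> pf pg; rewrite (deriveM (polyfun_derivable pf) (polyfun_derivable pg)).
by rewrite addrC [g a *: _]mulrC.
Qed.

Lemma derive_polyfun_cstM (c : R) f a v : polyfun f ->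
  'D_v (fun x => c * f x) a = c * 'D_v f a.
Proof. by move=> pf; rewrite (deriveMl _ (polyfun_derivable pf)). Qed.

Lemma derive_polyfun_sum (I : Type) (r : seq I) (F : I -> V -> R) a v :
  (forall i, polyfun (F i)) ->
  'D_v (fun x => \sum_(i <- r) F i x) a = \sum_(i <- r) 'D_v (F i) a.
Proof.
move=> pF; elim: r => [|i r IH].
  by rewrite big_nil; under eq_fun do rewrite big_nil; apply: derive_cst.
under eq_fun do rewrite big_cons.
by rewrite derive_polyfunD ?IH ?big_cons //; apply: polyfun_sum.
Qed.

Lemma derive_coordX (i : 'I_n) p a v :
  'D_v (fun x : V => x 0 i ^+ p) a = p%:R * a 0 i ^+ p.-1 * v 0 i.
Proof.
have -> : (fun x : V => x 0 i ^+ p) = (fun x : V => x 0 i) ^+ p.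
  by apply: funext => x; rewrite exprfctE.
by rewrite deriveX ?derive_coord //; apply/polyfun_derivable/polyfun_coord.
Qed.

Lemma polyfun_derive f v : polyfun f -> polyfun (fun a => 'D_v f a).
Proof.
elim=> [c|i|{}f g pf df pg dg|{}f g pf df pg dg].
- by apply: (eq_polyfun (polyfun_cst 0)) => x; rewrite derive_cst.
- by apply: (eq_polyfun (polyfun_cst (v 0 i))) => x; rewrite derive_coord.
- by apply: (eq_polyfun (polyfunD df dg)) => x; rewrite derive_polyfunD.
- apply: (eq_polyfun (polyfunD (polyfunM df pg) (polyfunM pf dg))) => x.
  by rewrite derive_polyfunM.
Qed.

End PolynomialFunctions.

Section Clifford.
Variables (R : comNzRingType) (m : nat).
Implicit Types (a b c : Cl R m) (A B C D : {set 'I_m}).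

Definition symdiff A B : {set 'I_m} := (A :\: B) :|: (B :\: A).

Lemma in_symdiff A B x : (x \in symdiff A B) = (x \in A) (+) (x \in B).
Proof. by rewrite !inE; case: (x \in A); case: (x \in B). Qed.

Lemma symdiffK A B : symdiff A (symdiff A B) = B.
Proof. by apply/setP => x; rewrite !in_symdiff; case: (x \in A); case: (x \in B). Qed.

Lemma symdiffC A B : symdiff A B = symdiff B A.
Proof. by apply/setP => x; rewrite !in_symdiff; case: (x \in A); case: (x \in B). Qed.

Lemma symdiff0 A : symdiff finset.set0 A = A.
Proof. by apply/setP => x; rewrite !in_symdiff inE. Qed.

Lemma symdiffv A : symdiff A A = finset.set0.
Proof. by apply/setP => x; rewrite !in_symdiff inE; case: (x \in A). Qed.

Lemma symdiffKl A B C : symdiff (symdiff A B) (symdiff A C) = symdiff B C.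
Proof.
by apply/setP => x; rewrite !in_symdiff; case: (x \in A); case: (x \in B); case: (x \in C).
Qed.

Definition signb (b : bool) : R := (-1) ^+ b.

Lemma signbM (u v : bool) : signb u * signb v = signb (u (+) v).
Proof. by case: u; case: v; rewrite /signb ?(expr0, expr1, mulr1, mul1r, mulrNN). Qed.

Lemma sign_card (T : finType) (S : {set T}) : (-1) ^+ #|S| = \prod_x signb (x \in S).
Proof.
rewrite -prodr_const big_mkcond /=; apply: eq_bigr => x _.
by case: (x \in S); rewrite /signb ?expr0 ?expr1.
Qed.

(* Split into one factor per pair of indices and one per index, each depending only on
   memberships, the cocycle identity becomes a boolean identity for each pair and index. *)
Definition inversion_sign A B : R :=
  \prod_(p : 'I_m * 'I_m) signb [&& p.1 \in A, p.2 \in B & (p.2 < p.1)%N].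
Definition overlap_sign A B : R := \prod_(i : 'I_m) signb ((i \in A) && (i \in B)).

Lemma blade_signE A B : blade_sign R A B = inversion_sign A B * overlap_sign A B.
Proof.
rewrite /blade_sign exprD !sign_card; congr (_ * _); apply: eq_bigr => p _; rewrite !inE //.
by rewrite andbA.
Qed.

Lemma blade_sign_cocycle A B C :
  blade_sign R A B * blade_sign R (symdiff A B) C =
  blade_sign R A (symdiff B C) * blade_sign R B C.
Proof.
rewrite !blade_signE mulrACA [RHS]mulrACA; congr (_ * _).
  rewrite /inversion_sign -!big_split; apply: eq_bigr => p _ /=; rewrite !signbM.
  by rewrite !in_symdiff; case: (p.1 \in A); case: (p.1 \in B); case: (p.2 \in B);
    case: (p.2 \in C); case: (p.2 < p.1)%N.
rewrite /overlap_sign -!big_split; apply: eq_bigr => i _ /=; rewrite !signbM.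
by rewrite !in_symdiff; case: (i \in A); case: (i \in B); case: (i \in C).
Qed.

Lemma blade_sign0l B : blade_sign R finset.set0 B = 1.
Proof.
by rewrite blade_signE /inversion_sign /overlap_sign !big1 ?mulr1 // => p _; rewrite inE.
Qed.

Lemma clmulE a b D :
  clmul a b D = \sum_A a A * b (symdiff A D) * blade_sign R A (symdiff A D).
Proof.
rewrite /clmul sum_ffunE; apply: eq_bigr => A _; rewrite sum_ffunE.
rewrite (bigD1 (symdiff A D)) //= big1 ?addr0.
  by rewrite !ffunE -/(symdiff A (symdiff A D)) symdiffK eqxx mulr1.
move=> B neq_B; rewrite !ffunE -/(symdiff A B).
case: eqP => [E|]; last by rewrite mulr0.
by move: neq_B; rewrite E symdiffK eqxx.
Qed.

Lemma clmulA a b c : clmul (clmul a b) c = clmul a (clmul b c).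
Proof.
apply/ffunP => D; rewrite !clmulE.
under eq_bigr do rewrite clmulE !mulr_suml.
rewrite exchange_big /=; apply: eq_bigr => A _.
rewrite clmulE mulr_sumr mulr_suml [RHS](reindex_inj (inv_inj (symdiffK A))) /=.
apply: eq_bigr => X _; rewrite symdiffKl.
have := blade_sign_cocycle A (symdiff A X) (symdiff X D).
rewrite symdiffK (symdiffC A X) symdiffKl -(symdiffC A X) => cocycle.
transitivity (a A * b (symdiff A X) * c (symdiff X D) *
  (blade_sign R A (symdiff A X) * blade_sign R X (symdiff X D))); first by ring.
by rewrite cocycle; ring.
Qed.

Lemma clscaleE k a A : clscale k a A = k * a A. Proof. by rewrite ffunE. Qed.
Lemma clscale1 a : clscale 1 a = a. Proof. by apply/ffunP => A; rewrite ffunE mul1r. Qed.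
Lemma clscale0 a : clscale 0 a = 0. Proof. by apply/ffunP => A; rewrite !ffunE mul0r. Qed.
Lemma clscaler0 k : clscale k (0 : Cl R m) = 0.
Proof. by apply/ffunP => A; rewrite !ffunE mulr0. Qed.
Lemma clscaleA k l a : clscale k (clscale l a) = clscale (k * l) a.
Proof. by apply/ffunP => A; rewrite !ffunE mulrA. Qed.
Lemma clscaleDr k a b : clscale k (a + b) = clscale k a + clscale k b.
Proof. by apply/ffunP => A; rewrite !ffunE mulrDr. Qed.
Lemma clscaleDl k l a : clscale (k + l) a = clscale k a + clscale l a.
Proof. by apply/ffunP => A; rewrite !ffunE mulrDl. Qed.
Lemma clscaleN k a : clscale (- k) a = - clscale k a.
Proof. by apply/ffunP => A; rewrite !ffunE mulNr. Qed.
Lemma clscale_sumr (I : Type) (r : seq I) (F : I -> Cl R m) k :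
  clscale k (\sum_(i <- r) F i) = \sum_(i <- r) clscale k (F i).
Proof. by elim/big_rec2: _ => [|i x y _ <-]; rewrite ?clscaler0 ?clscaleDr. Qed.
Lemma clscale_suml (I : Type) (r : seq I) (F : I -> R) a :
  clscale (\sum_(i <- r) F i) a = \sum_(i <- r) clscale (F i) a.
Proof. by elim/big_rec2: _ => [|i x y _ <-]; rewrite ?clscale0 ?clscaleDl. Qed.

Lemma clmulDl a b c : clmul (a + b) c = clmul a c + clmul b c.
Proof.
apply/ffunP => D; rewrite ffunE !clmulE -big_split; apply: eq_bigr => A _.
by rewrite ffunE !mulrDl.
Qed.
Lemma clmulDr a b c : clmul a (b + c) = clmul a b + clmul a c.
Proof.
apply/ffunP => D; rewrite ffunE !clmulE -big_split; apply: eq_bigr => A _.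
by rewrite ffunE !mulrDr !mulrDl.
Qed.
Lemma clmul0l b : clmul 0 b = 0.
Proof. by apply/ffunP => D; rewrite clmulE ffunE big1 // => A _; rewrite ffunE !mul0r. Qed.
Lemma clmul0r b : clmul b 0 = 0.
Proof. by apply/ffunP => D; rewrite clmulE ffunE big1 // => A _; rewrite ffunE mulr0 mul0r. Qed.
Lemma clmulZl k a b : clmul (clscale k a) b = clscale k (clmul a b).
Proof.
apply/ffunP => D; rewrite ffunE !clmulE mulr_sumr; apply: eq_bigr => A _.
by rewrite ffunE !mulrA.
Qed.
Lemma clmulZr k a b : clmul a (clscale k b) = clscale k (clmul a b).
Proof.
apply/ffunP => D; rewrite ffunE !clmulE mulr_sumr; apply: eq_bigr => A _.
by rewrite ffunE; ring.
Qed.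
Lemma clmul_suml (I : Type) (r : seq I) (F : I -> Cl R m) b :
  clmul (\sum_(i <- r) F i) b = \sum_(i <- r) clmul (F i) b.
Proof. by elim/big_rec2: _ => [|i x y _ <-]; rewrite ?clmul0l ?clmulDl. Qed.
Lemma clmul_sumr (I : Type) (r : seq I) (F : I -> Cl R m) b :
  clmul b (\sum_(i <- r) F i) = \sum_(i <- r) clmul b (F i).
Proof. by elim/big_rec2: _ => [|i x y _ <-]; rewrite ?clmul0r ?clmulDr. Qed.

Lemma clmul1l a : clmul (cl1 R m) a = a.
Proof.
apply/ffunP => D; rewrite clmulE (bigD1 finset.set0) //= big1 ?addr0.
  by rewrite ffunE eqxx symdiff0 blade_sign0l !mulr1 mul1r.
by move=> A /negbTE neq_A; rewrite ffunE neq_A !mul0r.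
Qed.

Lemma clmul_blade A B :
  clmul (blade R A) (blade R B) = clscale (blade_sign R A B) (blade R (symdiff A B)).
Proof.
apply/ffunP => D; rewrite clmulE ffunE (bigD1 A) //= big1 ?addr0.
  rewrite !ffunE eqxx mul1r.
  have [<-|neq_B] := eqVneq (symdiff A D) B; first by rewrite symdiffK eqxx mulr1 mul1r.
  rewrite mul0r; case: eqP => [E|]; last by rewrite mulr0.
  by move: neq_B; rewrite E symdiffK eqxx.
by move=> X /negbTE neq_X; rewrite ffunE neq_X !mul0r.
Qed.

Lemma blade_sign11 (i j : 'I_m) :
  blade_sign R [set i] [set j] = signb (j < i)%N * signb (i == j).
Proof.
rewrite blade_signE /inversion_sign /overlap_sign (bigD1 (i, j)) //= big1 ?mulr1.
  rewrite (bigD1 i) //= big1 ?mulr1 ?inE ?eqxx //.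
  by move=> l /negbTE neq_l; rewrite !inE neq_l.
move=> [p q] /= neq_pq; rewrite !inE.
have [eq_pi | _] := eqVneq p i; last by rewrite /signb expr0.
have [eq_qj | _] := eqVneq q j; last by rewrite /signb expr0.
by rewrite eq_pi eq_qj eqxx in neq_pq.
Qed.

Lemma clgen_sqr (i : 'I_m) : clmul (clgen R i) (clgen R i) = clscale (-1) (cl1 R m).
Proof. by rewrite clmul_blade blade_sign11 ltnn eqxx /signb expr0 expr1 mul1r symdiffv. Qed.

Lemma clgen_anticomm (i j : 'I_m) : i != j ->
  clmul (clgen R i) (clgen R j) + clmul (clgen R j) (clgen R i) = 0.
Proof.
move=> neq_ij; rewrite !clmul_blade !blade_sign11 symdiffC (negbTE neq_ij).
rewrite eq_sym (negbTE neq_ij) /signb expr0 !mulr1 -clscaleDl.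
case: (ltngtP i j) => [_|_|/val_inj eq_ij]; last by rewrite eq_ij eqxx in neq_ij.
  by rewrite expr0 expr1 addrN clscale0.
by rewrite expr0 expr1 addNr clscale0.
Qed.

Lemma clgen_vec_anticomm (j : 'I_m) (y : 'rV[R]_m) :
  clmul (clgen R j) (clvec y) + clmul (clvec y) (clgen R j) =
  clscale (- (y 0 j *+ 2)) (cl1 R m).
Proof.
rewrite /clvec clmul_sumr clmul_suml -big_split /= (bigD1 j) //= big1 ?addr0.
  rewrite clmulZr clmulZl clgen_sqr -clscaleDr -clscaleDl clscaleA.
  by congr clscale; rewrite mulrBr mulrN1 mulr1 -opprD -mulr2n.
by move=> i neq_ij; rewrite clmulZr clmulZl -clscaleDr addrC clgen_anticomm ?clscaler0.
Qed.

Lemma clmul_gen_vec (j : 'I_m) (y : 'rV[R]_m) g :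
  clmul (clgen R j) (clmul (clvec y) g) =
  - clmul (clvec y) (clmul (clgen R j) g) + clscale (- (y 0 j *+ 2)) g.
Proof.
have := congr1 (fun z => clmul z g) (clgen_vec_anticomm j y).
rewrite /= clmulDl clmulZl clmul1l -!clmulA => <-.
by rewrite addrC addrK.
Qed.

Lemma cl_blade_expand (a : Cl R m) : a = \sum_A clscale (a A) (blade R A).
Proof.
apply/ffunP => D; rewrite sum_ffunE (bigD1 D) //= big1 ?addr0 => [|A neq_AD].
  by rewrite !ffunE eqxx mulr1.
by rewrite !ffunE eq_sym (negbTE neq_AD) mulr0.
Qed.

End Clifford.

Section CliffordPolynomialFunctions.
Variables (R : realType) (n m : nat).
Local Notation V := 'rV[R]_n.
Implicit Types (F G : V -> Cl R m) (f : V -> R) (c : Cl R m).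

Definition cl_polyfun F := forall A, polyfun (fun x => F x A).

Lemma clpartialE i F x A : clpartial i F x A = 'D_(unitv R i) (fun y => F y A) x.
Proof. by rewrite ffunE. Qed.

Lemma cl_polyfun_C1 F : cl_polyfun F -> cl_C1 F.
Proof.
move=> pF A i; split=> [x|]; first exact: polyfun_derivable.
exact/polyfun_continuous/polyfun_derive.
Qed.


Lemma cl_polyfun_cst c : cl_polyfun (fun _ => c).
Proof. by move=> A; apply: polyfun_cst. Qed.


Lemma cl_polyfun_sum (I : Type) (r : seq I) (F : I -> V -> Cl R m) :
  (forall i, cl_polyfun (F i)) -> cl_polyfun (fun x => \sum_(i <- r) F i x).
Proof.
move=> pF A; apply: (eq_polyfun (polyfun_sum r (fun i => pF i A))) => x.
by rewrite sum_ffunE.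
Qed.

Lemma cl_polyfunZ f F : polyfun f -> cl_polyfun F -> cl_polyfun (fun x => clscale (f x) (F x)).
Proof. by move=> pf pF A; apply: (eq_polyfun (polyfunM pf (pF A))) => x; rewrite ffunE. Qed.

Lemma cl_polyfunM F G : cl_polyfun F -> cl_polyfun G -> cl_polyfun (fun x => clmul (F x) (G x)).
Proof.
move=> pF pG D; apply: (eq_polyfun (polyfun_sum (index_enum _) (fun A =>
  polyfunM (polyfunM (pF A) (pG (symdiff A D))) (polyfun_cst _ (blade_sign R A (symdiff A D)))))).
by move=> x; rewrite clmulE.
Qed.

Lemma clpartial_cst i c x : clpartial i (fun _ : V => c) x = 0.
Proof. by apply/ffunP => A; rewrite clpartialE ffunE derive_cst. Qed.


Lemma clpartial_sum i (I : Type) (r : seq I) (F : I -> V -> Cl R m) x :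
  (forall j, cl_polyfun (F j)) ->
  clpartial i (fun x => \sum_(j <- r) F j x) x = \sum_(j <- r) clpartial i (F j) x.
Proof.
move=> pF; apply/ffunP => A; rewrite clpartialE sum_ffunE.
under eq_fun do rewrite sum_ffunE.
rewrite derive_polyfun_sum => [|j]; last exact: pF.
by apply: eq_bigr => j _; rewrite clpartialE.
Qed.

Lemma clpartialZ i f F x : polyfun f -> cl_polyfun F ->
  clpartial i (fun x => clscale (f x) (F x)) x =
  clscale ('D_(unitv R i) f x) (F x) + clscale (f x) (clpartial i F x).
Proof.
move=> pf pF; apply/ffunP => A; rewrite clpartialE !ffunE.
by under eq_fun do rewrite ffunE; rewrite derive_polyfunM.
Qed.

Lemma clpartialM i F G x : cl_polyfun F -> cl_polyfun G ->
  clpartial i (fun x => clmul (F x) (G x)) x =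
  clmul (clpartial i F x) (G x) + clmul (F x) (clpartial i G x).
Proof.
move=> pF pG; apply/ffunP => D; rewrite clpartialE ffunE !clmulE.
under eq_fun do rewrite clmulE.
rewrite derive_polyfun_sum => [|A]; last by apply: polyfunM; [apply: polyfunM | apply: polyfun_cst].
rewrite -big_split; apply: eq_bigr => A _ /=.
rewrite derive_polyfunM; [|by apply: polyfunM|by apply: polyfun_cst].
by rewrite derive_cst mulr0 addr0 derive_polyfunM // !clpartialE; ring.
Qed.

End CliffordPolynomialFunctions.

Section Euler.
Variables (R : realType) (n : nat).
Local Notation V := 'rV[R]_n.
Implicit Types (f g : V -> R).

Definition euler f (y : V) : R := \sum_(i < n) y 0 i * 'D_(unitv R i) f y.

Lemma unitvE (i j : 'I_n) : unitv R i 0 j = (i == j)%:R.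
Proof. by rewrite mxE. Qed.

Lemma eulerM f g y : polyfun f -> polyfun g ->
  euler (fun x => f x * g x) y = euler f y * g y + f y * euler g y.
Proof.
move=> pf pg; rewrite /euler mulr_suml mulr_sumr -big_split; apply: eq_bigr => i _ /=.
by rewrite derive_polyfunM //; ring.
Qed.

Lemma euler_coordX (l : 'I_n) p y : euler (fun x => x 0 l ^+ p) y = p%:R * y 0 l ^+ p.
Proof.
rewrite /euler (bigD1 l) //= big1 ?addr0 => [|i neq_il]; last first.
  by rewrite derive_coordX unitvE (negbTE neq_il) !mulr0.
rewrite derive_coordX unitvE eqxx mulr1.
by case: p => [|p]; rewrite ?mul0r ?mulr0 //= exprS; ring.
Qed.

Lemma euler_prod (I : Type) (r : seq I) (g : I -> V -> R) (d : I -> R) y :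
  (forall i, polyfun (g i)) -> (forall i x, euler (g i) x = d i * g i x) ->
  euler (fun x => \prod_(i <- r) g i x) y = (\sum_(i <- r) d i) * \prod_(i <- r) g i y.
Proof.
move=> pg eig; elim: r y => [|i r IH] y.
  rewrite !big_nil mul0r /euler big1 // => j _.
  by under eq_fun do rewrite big_nil; rewrite derive_cst mulr0.
under eq_fun do rewrite big_cons.
by rewrite eulerM ?IH ?eig ?big_cons //; [ring | apply: polyfun_prod].
Qed.

Lemma euler_monomial (a : 'I_n -> nat) y :
  euler (monomial a) y = (\sum_(i < n) a i)%:R * monomial a y.
Proof.
rewrite natr_sum (@euler_prod _ _ _ (fun i => (a i)%:R)) // => i.
  exact/polyfunX/polyfun_coord.
by move=> x; rewrite euler_coordX.
Qed.

Lemma euler_sum (I : Type) (r : seq I) (F : I -> V -> R) y :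
  (forall i, polyfun (F i)) ->
  euler (fun x => \sum_(i <- r) F i x) y = \sum_(i <- r) euler (F i) y.
Proof.
move=> pF; rewrite /euler exchange_big /=; apply: eq_bigr => i _.
by rewrite derive_polyfun_sum // mulr_sumr.
Qed.

Lemma euler_cstM (c : R) f y : polyfun f -> euler (fun x => c * f x) y = c * euler f y.
Proof.
move=> pf; rewrite /euler mulr_sumr; apply: eq_bigr => i _.
by rewrite derive_polyfun_cstM //; ring.
Qed.

Variable (m : nat).
Implicit Types (F G : V -> Cl R m).

Definition cleuler F (y : V) : Cl R m := \sum_(i < n) clscale (y 0 i) (clpartial i F y).

Lemma cleulerE F y A : cleuler F y A = euler (fun x => F x A) y.
Proof. by rewrite /cleuler sum_ffunE; apply: eq_bigr => i _; rewrite clscaleE clpartialE. Qed.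

Lemma cleulerM F G y : cl_polyfun F -> cl_polyfun G ->
  cleuler (fun x => clmul (F x) (G x)) y = clmul (cleuler F y) (G y) + clmul (F y) (cleuler G y).
Proof.
move=> pF pG; rewrite /cleuler clmul_suml clmul_sumr -big_split; apply: eq_bigr => i _ /=.
by rewrite clpartialM // clscaleDr clmulZl clmulZr.
Qed.

Lemma homog_poly_expand k F : cl_homog_poly k F ->
  exists2 s : seq (Cl R m * ('I_n -> nat)),
    all (fun p : Cl R m * ('I_n -> nat) => (\sum_(i < n) p.2 i)%N == k) s &
    forall A, (fun x => F x A) = (fun x => \sum_(p <- s) p.1 A * monomial p.2 x).
Proof.
case=> s [deg_s eqF]; exists s => // A; apply: funext => x.
by rewrite eqF sum_ffunE; apply: eq_bigr => p _; rewrite ffunE mulrC.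
Qed.

Lemma homog_poly_cl_polyfun k F : cl_homog_poly k F -> cl_polyfun F.
Proof.
move=> /homog_poly_expand[s _ eqF] A; rewrite eqF.
by apply: polyfun_sum => p; apply/polyfunM/polyfun_monomial/polyfun_cst.
Qed.

Lemma cleuler_homog k F y : cl_homog_poly k F -> cleuler F y = clscale k%:R (F y).
Proof.
move=> /homog_poly_expand[s deg_s eqF]; apply/ffunP => A.
rewrite cleulerE eqF euler_sum => [|p]; last exact/polyfunM/polyfun_monomial/polyfun_cst.
rewrite ffunE -[F y A]/((fun x => F x A) y) eqF mulr_sumr !big_seq; apply: eq_bigr => p s_p.
rewrite euler_cstM ?euler_monomial; last exact: polyfun_monomial.
by move/allP/(_ p s_p)/eqP: deg_s => ->; ring.
Qed.

End Euler.

Section Representation.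
Variables (R : realType) (n m : nat).
Local Notation V := 'rV[R]_n.

Lemma monomialD (a b : 'I_n -> nat) (x : V) :
  monomial (fun i => (a i + b i)%N) x = monomial a x * monomial b x.
Proof. by rewrite /monomial -big_split; apply: eq_bigr => i _; rewrite exprD. Qed.

Lemma polyfun_expand (f : V -> R) : polyfun f ->
  exists s : seq (R * ('I_n -> nat)), forall x, f x = \sum_(p <- s) p.1 * monomial p.2 x.
Proof.
elim=> [c|i|{}f g _ [s ef] _ [t eg]|{}f g _ [s ef] _ [t eg]].
- by exists [:: (c, fun _ => 0%N)] => x; rewrite big_seq1 /= /monomial big1 ?mulr1.
- exists [:: (1, fun j => nat_of_bool (j == i))] => x.
  rewrite big_seq1 /= mul1r /monomial (bigD1 i) //= eqxx expr1 big1 ?mulr1 //.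
  by move=> j /negbTE ->; rewrite expr0.
- by exists (s ++ t) => x; rewrite big_cat /= ef eg.
- exists [seq (p.1 * q.1, fun i => (p.2 i + q.2 i)%N) | p <- s, q <- t] => x.
  rewrite big_allpairs_dep ef eg mulr_suml; apply: eq_bigr => p _.
  by rewrite mulr_sumr; apply: eq_bigr => q _ /=; rewrite monomialD; ring.
Qed.

Lemma cl_polyfun_poly (F : V -> Cl R m) : cl_polyfun F -> cl_poly F.
Proof.
move=> pF; suff [s eqF] : exists s : seq (Cl R m * ('I_n -> nat)), forall x,
    \sum_(A <- index_enum _) clscale (F x A) (blade R A) =
    \sum_(p <- s) clscale (monomial p.2 x) p.1.
  by exists s => x; rewrite -eqF -cl_blade_expand.
elim: (index_enum _) => [|A r [s eqF]]; first by exists [::] => x; rewrite !big_nil.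
have [t eqFA] := polyfun_expand (pF A).
exists ([seq (clscale q.1 (blade R A), q.2) | q <- t] ++ s) => x.
rewrite big_cons big_cat /= eqF big_map eqFA clscale_suml; congr (_ + _).
by apply: eq_bigr => q _; rewrite clscaleA mulrC.
Qed.

End Representation.

Section VectorVariable.
Variables (R : realType) (m : nat).
Local Notation V := 'rV[R]_m.

Lemma cl_polyfun_vec_term (j : 'I_m) :
  cl_polyfun (fun y : V => clscale (y 0 j) (clgen R j)).
Proof. by apply: cl_polyfunZ; [apply: polyfun_coord | apply: cl_polyfun_cst]. Qed.

Lemma cl_polyfun_vec : cl_polyfun (fun y : V => clvec y).
Proof. exact: cl_polyfun_sum cl_polyfun_vec_term. Qed.

Lemma cl_polyfun_vecX l : cl_polyfun (fun y : V => clexp (clvec y) l).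
Proof. by elim: l => [|l IH]; [apply: cl_polyfun_cst | apply: cl_polyfunM cl_polyfun_vec IH]. Qed.

Lemma clpartial_vec i (y : V) : clpartial i (fun y : V => clvec y) y = clgen R i.
Proof.
have partial_term j :
    clpartial i (fun y : V => clscale (y 0 j) (clgen R j)) y = clscale (i == j)%:R (clgen R j).
  rewrite clpartialZ ?clpartial_cst ?clscaler0 ?addr0 ?derive_coord ?unitvE //.
    exact: polyfun_coord.
  exact: cl_polyfun_cst.
rewrite clpartial_sum => [|j]; last exact: cl_polyfun_vec_term.
under eq_bigr do rewrite partial_term.
rewrite (bigD1 i) //= eqxx clscale1 big1 ?addr0 // => j neq_ji.
by rewrite eq_sym (negbTE neq_ji) clscale0.
Qed.

Lemma cleuler_vec y : cleuler (fun y : V => clvec y) y = clvec y.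
Proof. by apply: eq_bigr => i _; rewrite clpartial_vec. Qed.

End VectorVariable.

(* [beta_nat] agrees with [beta] except at 0, where it is 0 rather than 1, matching
   [dirac P = 0]. *)
Definition beta_nat (m k l : nat) : nat :=
  if l == 0%N then 0 else if odd l then (2 * k + m + l - 1)%N else l.

Lemma beta_natS m k l : (beta_nat m k l.+1 + beta_nat m k l = m + 2 * l + 2 * k)%N.
Proof. by rewrite /beta_nat /=; case: l => [|l] /=; [lia | case: (odd l) => /=; lia]. Qed.

Section HomogeneousMonogenic.
Variables (R : realType) (m k : nat) (P : 'rV[R]_m -> Cl R m).
Hypothesis P_poly : cl_polyfun P.
Hypothesis P_euler : forall y, cleuler P y = clscale k%:R (P y).
Hypothesis P_dirac : forall y, Defs.dirac P y = 0.
Local Notation V := 'rV[R]_m.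

Definition powvec l (y : V) : Cl R m := clmul (clexp (clvec y) l) (P y).

Lemma powvec0 : powvec 0 = P.
Proof. by apply: funext => y; rewrite /powvec clmul1l. Qed.

Lemma powvecS l : powvec l.+1 = fun y => clmul (clvec y) (powvec l y).
Proof. by apply: funext => y; rewrite /powvec /clexp /= clmulA. Qed.

Lemma cl_polyfun_powvec l : cl_polyfun (powvec l).
Proof. exact: cl_polyfunM (cl_polyfun_vecX _ _) P_poly. Qed.

Lemma cleuler_powvec l y : cleuler (powvec l) y = clscale (l + k)%:R (powvec l y).
Proof.
elim: l y => [|l IH] y; first by rewrite powvec0 P_euler.
rewrite powvecS cleulerM ?cleuler_vec ?IH ?clmulZr; last exact: cl_polyfun_powvec.
  rewrite -{1}(clscale1 (clmul _ _)) -clscaleDl /=.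
  by rewrite addSn -natr1 addrC.
exact: cl_polyfun_vec.
Qed.

Lemma clvec_mul_powvec_pred (c : R) l y :
  clmul (clvec y) (clscale (c * (beta_nat m k l)%:R) (powvec l.-1 y)) =
  clscale (c * (beta_nat m k l)%:R) (powvec l y).
Proof.
case: l => [|l]; first by rewrite mulr0 !clscale0 clmul0r.
by rewrite clmulZr powvecS.
Qed.

(* With e_j y + y e_j = -2 y_j, the Dirac operator of y G_l produces -m G_l (from the
   e_j^2), -y (dirac G_l) and -2 (Euler operator of G_l) = -2(l + k) G_l. *)
Lemma dirac_powvec l y :
  Defs.dirac (powvec l) y = clscale (- (beta_nat m k l)%:R) (powvec l.-1 y).
Proof.
elim: l y => [|l IH] y; first by rewrite powvec0 P_dirac oppr0 clscale0.
have partial_powvecS j : clpartial j (powvec l.+1) y =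
    clmul (clgen R j) (powvec l y) + clmul (clvec y) (clpartial j (powvec l) y).
  rewrite powvecS clpartialM ?clpartial_vec //; [exact: cl_polyfun_vec | exact: cl_polyfun_powvec].
rewrite /Defs.dirac; under eq_bigr do
  rewrite partial_powvecS clmulDr -clmulA clgen_sqr clmulZl clmul1l clmul_gen_vec.
rewrite !big_split /= -clscale_suml sumr_const card_ord sumrN -clmul_sumr -/(Defs.dirac _ y).
have -> : \sum_(i < m) clscale (- (y 0 i *+ 2)) (clpartial i (powvec l) y) =
    clscale (- 2%:R) (cleuler (powvec l) y).
  by rewrite /cleuler clscale_sumr; apply: eq_bigr => i _; rewrite clscaleA mulNr mulr_natl.
rewrite IH -[- (beta_nat m k l)%:R]mulN1r clvec_mul_powvec_pred cleuler_powvec.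
rewrite clscaleA -clscaleN -!clscaleDl.
congr clscale; have := congr1 (fun t : nat => t%:R : R) (beta_natS m k l).
by rewrite /= !natrD => ?; rewrite mulNrn; lra.
Qed.

End HomogeneousMonogenic.

Section SpatialPart.
Variables (R : realType) (m : nat).
Local Notation W := 'rV[R]_(m.+1).
Local Notation V := 'rV[R]_m.

Lemma xvec_linear (h : R) (v x : W) : xvec (h *: v + x) = h *: xvec v + xvec x.
Proof. by apply/rowP => j; rewrite !mxE. Qed.

Lemma derive_xvec (g : V -> R) (x v : W) :
  'D_v (fun y => g (xvec y)) x = 'D_(xvec v) g (xvec x).
Proof. by rewrite /derive; do 2!f_equal; apply: funext => h /=; rewrite xvec_linear. Qed.

Lemma xvec_unitv_lift (j : 'I_m) : xvec (unitv R (lift ord0 j)) = unitv R j.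
Proof. by apply/rowP => i; rewrite !mxE (inj_eq lift_inj). Qed.

Lemma xvec_unitv0 : xvec (unitv R (ord0 : 'I_m.+1)) = 0.
Proof. by apply/rowP => i; rewrite !mxE (negbTE (neq_lift _ _)). Qed.

Lemma polyfun_xvec (g : V -> R) : polyfun g -> polyfun (fun x : W => g (xvec x)).
Proof.
elim=> [c|i|f1 g1 _ pf _ pg|f1 g1 _ pf _ pg].
- exact: polyfun_cst.
- by apply: (eq_polyfun (@polyfun_coord R m.+1 (lift ord0 i))) => x; rewrite mxE.
- exact: polyfunD.
- exact: polyfunM.
Qed.

Lemma cl_polyfun_xvec (G : V -> Cl R m) : cl_polyfun G -> cl_polyfun (fun x : W => G (xvec x)).
Proof. by move=> pG A; apply: (polyfun_xvec (pG A)). Qed.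

Lemma clpartial_xvec_lift (G : V -> Cl R m) j (x : W) :
  clpartial (lift ord0 j) (fun x : W => G (xvec x)) x = clpartial j G (xvec x).
Proof.
by apply/ffunP => A; rewrite !clpartialE (derive_xvec (fun z => G z A)) xvec_unitv_lift.
Qed.

Lemma clpartial_xvec0 (G : V -> Cl R m) (x : W) :
  clpartial ord0 (fun x : W => G (xvec x)) x = 0.
Proof.
by apply/ffunP => A; rewrite !clpartialE (derive_xvec (fun z => G z A)) xvec_unitv0 derive0 ffunE.
Qed.

End SpatialPart.

Section AppellCoefficients.
Variables (R : realType) (m k : nat).
Hypothesis m_gt0 : (0 < m)%N.

Definition appell_coef n j : R := 'C(n, j)%:R * Ccoef R m k n j.

Lemma beta_natE s : (0 < s)%N -> beta R m k s = (beta_nat m k s)%:R.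
Proof. by case: s => // s _; rewrite /beta /beta_nat /=; case: (odd s). Qed.

Lemma beta_neq0 s : beta R m k s != 0.
Proof.
case: s => [|s]; first by rewrite /beta oner_eq0.
by rewrite beta_natE // pnatr_eq0 /beta_nat /=; case: (odd s) => /=; lia.
Qed.

Lemma appell_coefS_beta n j : (j < n)%N ->
  appell_coef n j.+1 * j.+1%:R = appell_coef n j * (beta_nat m k (n - j))%:R.
Proof.
move=> lt_jn; rewrite /appell_coef /Ccoef.
have [d eq_d] : exists d, (n - j = d.+1)%N by exists (n - j).-1; rewrite prednK // subn_gt0.
have -> : (n - j.+1 = d)%N by rewrite subnS eq_d.
rewrite eq_d (big_ord_recr d.+1) /= -beta_natE // invfM.
have prod_neq0 : \prod_(i < d.+1) beta R m k i != 0 by apply/prodf_neq0 => i _; apply: beta_neq0.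
have binom_fact : ('C(n, j.+1) * j.+1 * d`! = 'C(n, j) * d.+1`!)%N.
  by rewrite factS -[('C(n, j.+1) * j.+1)%N]mulnC mul_bin_left eq_d; ring.
move/(congr1 (fun t : nat => t%:R : R)): binom_fact; rewrite !natrM => binom_fact.
transitivity ('C(n, j.+1)%:R * j.+1%:R * d`!%:R / \prod_(i < d.+1) beta R m k i).
  by rewrite !mulrA; ring.
by rewrite binom_fact; field; rewrite prod_neq0 beta_neq0.
Qed.

Lemma appell_coefSS n j : appell_coef n.+1 j.+1 * j.+1%:R = n.+1%:R * appell_coef n j.
Proof.
rewrite /appell_coef /Ccoef subSS.
have := mul_bin_diag n.+1 j => /= /(congr1 (fun t : nat => t%:R : R)); rewrite !natrM => binom.
by rewrite [LHS]mulrC mulrA -binom; ring.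
Qed.

Lemma appell_coef00 : appell_coef 0 0 = 1.
Proof. by rewrite /appell_coef /Ccoef bin0 big_ord1 /beta /= mul1r divr1. Qed.

End AppellCoefficients.

Section AppellSequence.
Variables (R : realType) (m k : nat) (P : 'rV[R]_m -> Cl R m).
Hypothesis m_gt0 : (0 < m)%N.
Hypothesis P_poly : cl_polyfun P.
Hypothesis P_euler : forall y, cleuler P y = clscale k%:R (P y).
Hypothesis P_dirac : forall y, Defs.dirac P y = 0.
Local Notation W := 'rV[R]_(m.+1).

Definition appell_term n j (x : W) : Cl R m :=
  clscale (appell_coef R m k n j * x0 x ^+ j) (powvec P (n - j) (xvec x)).

Lemma appellE n : appellM k P n = fun x => \sum_(j < n.+1) appell_term n j x.
Proof.
by apply: funext => x; rewrite /appellM clmul_suml; apply: eq_bigr => j _; rewrite clmulZl.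
Qed.

Lemma polyfun_x0X (c : R) j : polyfun (fun x : W => c * x0 x ^+ j).
Proof. by apply: polyfunM; [apply: polyfun_cst | apply/polyfunX/polyfun_coord]. Qed.

Lemma cl_polyfun_appell_term n j : cl_polyfun (appell_term n j).
Proof. exact/(cl_polyfunZ (polyfun_x0X _ _))/cl_polyfun_xvec/cl_polyfun_powvec. Qed.

Lemma cl_polyfun_appell n : cl_polyfun (appellM k P n).
Proof. by rewrite appellE; apply: cl_polyfun_sum => j; apply: cl_polyfun_appell_term. Qed.

Lemma clpartial0_appell n x : clpartial ord0 (appellM k P n) x =
  \sum_(j < n.+1) clscale (appell_coef R m k n j * (j%:R * x0 x ^+ j.-1))
                          (powvec P (n - j) (xvec x)).
Proof.
rewrite appellE clpartial_sum => [|j]; last exact: cl_polyfun_appell_term.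
apply: eq_bigr => j _; rewrite clpartialZ ?clpartial_xvec0 ?clscaler0 ?addr0; last first.
- exact/cl_polyfun_xvec/cl_polyfun_powvec.
- exact: polyfun_x0X.
by rewrite derive_polyfun_cstM ?derive_coordX ?unitvE ?eqxx ?mulr1 //; apply/polyfunX/polyfun_coord.
Qed.

Lemma clpartial_lift_appell n i x : clpartial (lift ord0 i) (appellM k P n) x =
  \sum_(j < n.+1) clscale (appell_coef R m k n j * x0 x ^+ j)
                          (clpartial i (powvec P (n - j)) (xvec x)).
Proof.
rewrite appellE clpartial_sum => [|j]; last exact: cl_polyfun_appell_term.
apply: eq_bigr => j _; rewrite clpartialZ ?clpartial_xvec_lift; last first.
- exact/cl_polyfun_xvec/cl_polyfun_powvec.
- exact: polyfun_x0X.
rewrite derive_polyfun_cstM ?derive_coordX ?unitvE; last exact/polyfunX/polyfun_coord.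
by rewrite eq_sym (negbTE (neq_lift _ _)) !mulr0 clscale0 add0r.
Qed.

Lemma dirac_appell n x :
  \sum_(i < m) clmul (clgen R i) (clpartial (lift ord0 i) (appellM k P n) x) =
  \sum_(j < n.+1) clscale (appell_coef R m k n j * x0 x ^+ j * - (beta_nat m k (n - j))%:R)
                          (powvec P (n - j).-1 (xvec x)).
Proof.
under eq_bigr do rewrite clpartial_lift_appell clmul_sumr.
rewrite exchange_big /=; apply: eq_bigr => j _.
under eq_bigr do rewrite clmulZr.
by rewrite -clscale_sumr -/(Defs.dirac _ (xvec x)) (dirac_powvec (k := k)) // clscaleA.
Qed.

(* The j-th term of the Dirac part cancels the (j+1)-th term of the x_0-derivative. *)
Lemma cauchy_riemann_appell n x : cauchy_riemann (appellM k P n) x = 0.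
Proof.
rewrite /cauchy_riemann clpartial0_appell dirac_appell.
rewrite big_ord_recl [X in _ + X]big_ord_recr /= subnn mul0r mulr0 clscale0 add0r.
rewrite oppr0 mulr0 clscale0 addr0 -big_split big1 // => i _ /=.
rewrite /bump /= add0n add1n subnS -clscaleDl mulrA appell_coefS_beta //.
by rewrite [X in clscale X _](_ : _ = 0) ?clscale0 //; ring.
Qed.

Lemma cauchy_riemann_conj_appell n x : (1 <= n)%N ->
  clscale 2^-1 (cauchy_riemann_conj (appellM k P n) x) = clscale n%:R (appellM k P n.-1 x).
Proof.
move=> n_ge1; have := cauchy_riemann_appell n x; rewrite /cauchy_riemann_conj /cauchy_riemann.
move=> /eqP; rewrite addrC addr_eq0 => /eqP ->.
rewrite opprK -(clscale1 (clpartial ord0 (appellM k P n) x)) -clscaleDl.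
rewrite clscaleA mulVf ?pnatr_eq0 // clscale1.
case: n n_ge1 => // n _; rewrite clpartial0_appell big_ord_recl /= mul0r mulr0 clscale0 add0r.
rewrite appellE clscale_sumr; apply: eq_bigr => i _.
by rewrite clscaleA /bump /= add0n add1n subSS mulrA appell_coefSS -mulrA.
Qed.

Lemma appell0 x : appellM k P 0 x = P (xvec x).
Proof.
by rewrite appellE big_ord1 /appell_term appell_coef00 expr0 mulr1 clscale1 subn0 powvec0.
Qed.

End AppellSequence.

Unset Implicit Arguments.
Theorem mainTheorem1 (R : realType) (m k : nat) (P : 'rV[R]_m -> Cl R m) :
  (0 < m)%N ->
  cl_homog_poly k P ->
  monogenic_Rm P ->
  (forall x : 'rV[R]_(m.+1), appellM k P 0 x = P (xvec x)) /\
  (forall n : nat, cl_poly (appellM k P n) /\ monogenic_Rm1 (appellM k P n)) /\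
  (forall n : nat, (1 <= n)%N -> forall x : 'rV[R]_(m.+1),
     clscale 2^-1 (cauchy_riemann_conj (appellM k P n) x) = clscale n%:R (appellM k P n.-1 x)).
Proof.
move=> m_gt0 homP [_ P_dirac].
have P_poly := homog_poly_cl_polyfun homP.
have P_euler y := cleuler_homog y homP.
split; first exact: appell0.
split=> [n|n n_ge1 x]; last exact: cauchy_riemann_conj_appell.
have M_poly := cl_polyfun_appell k P_poly n.
split; first exact: cl_polyfun_poly.
by split=> [|x]; [exact: cl_polyfun_C1 | exact: cauchy_riemann_appell].
Qed.
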